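(* Let $k$ be a field of characteristic $0$, let $B$ be a $\mathbf{GL}$-algebra and let $N$ be a $B$-module. If $N$ is flat over $B$, then $N^{\mathbf{GL}}$ is flat over $B^{\mathbf{GL}}$.
   Context: $\mathbf{GL}=\bigcup_n\mathbf{GL}_n(k)$, standard representation $\mathbf{V}=\bigcup_n k^n$; a polynomial representation is a subquotient of a direct sum of tensor powers of $\mathbf{V}$. A $\mathbf{GL}$-algebra is a commutative unital $k$-algebra with $\mathbf{GL}$-action by algebra automorphisms making it a polynomial representation. A $B$-module means a $B$-module with a compatible $\mathbf{GL}$-action making it a polynomial representation. $(-)^{\mathbf{GL}}$ denotes $\mathbf{GL}$-invariants (equal to the degree-$0$ part of a polynomial representation). *)

From HB Require Import structures.
From mathcomp Require Import all_boot all_order all_algebra.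
From mathcomp Require Import boolp.

Set Implicit Arguments.
Unset Strict Implicit.
Unset Printing Implicit Defensive.

Import GRing.Theory.
Local Open Scope ring_scope.

(*  A finite formal sum  s = [:: (p_1, m_1); ...]  of elementary tensors     *)
(*  represents  \sum_i p_i (x) m_i  in  P (x)_R M ; it is zero there iff it  *)
(*  is killed by every R-balanced biadditive map (universal property of the  *)
(*  tensor product).  Every element of P (x)_R M is such a sum.             *)

Definition tensor_zero (R : comNzRingType) (P M : lmodType R)
    (s : seq (P * M)) : Prop :=
  forall (G : zmodType) (beta : P -> M -> G),
    (forall p p' m, beta (p + p') m = beta p m + beta p' m) ->
    (forall p m m', beta p (m + m') = beta p m + beta p m') ->
    (forall r p m, beta (r *: p) m = beta p (r *: m)) ->
    \sum_(x <- s) beta x.1 x.2 = 0.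

(* P is flat over R: for every injective R-linear f : M1 -> M2, the map
   1 (x) f : P (x)_R M1 -> P (x)_R M2 is injective. *)
Definition flat (R : comNzRingType) (P : lmodType R) : Prop :=
  forall (M1 M2 : lmodType R) (f : M1 -> M2),
    (forall r x y, f (r *: x + y) = r *: f x + f y) ->
    injective f ->
    forall s : seq (P * M1),
      tensor_zero [seq (x.1, f x.2) | x <- s] -> tensor_zero s.

(*  The group GL = \bigcup_n GL_n(k).  An element A of GL_n(k) is viewed as  *)
(*  the infinite matrix  extmx A  (A in the top-left corner, identity       *)
(*  elsewhere); two invertible matrices of possibly different sizes give   *)
(*  the same element of GL iff their extensions agree.                      *)

Section GL.
Variable k : fieldType.

Definition extmx n (A : 'M[k]_n) : nat -> nat -> k :=
  fun i j => match (insub i : option 'I_n), (insub j : option 'I_n) with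
             | Some i', Some j' => A i' j'
             | _, _ => (i == j)%:R
             end.

Definition GLaction (M : Type) (act : forall n, 'M[k]_n -> M -> M) : Prop :=
  [/\ forall n (x : M), act n 1%:M x = x,
      forall n (A B : 'M[k]_n), A \in unitmx -> B \in unitmx ->
        forall x, act n (A *m B) x = act n A (act n B x) &
      forall n m (A : 'M[k]_n) (A' : 'M[k]_m), A \in unitmx -> A' \in unitmx ->
        extmx A =2 extmx A' -> forall x, act n A x = act m A' x].

(* Direct sums  \bigoplus_{i \in I} T(V)  of copies of the tensor algebra
   T(V) = \bigoplus_d V^{(x) d}, V = \bigcup_n k^n with basis e_0, e_1, ... :
   an element is a finitely supported function  f : I * seq nat -> k,
   f (i, [:: j_1; ...; j_d]) being the coefficient of e_{j_1} (x)...(x) e_{j_d}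
   in the i-th copy. *)
Definition tsum (I : Type) := I * seq nat -> k.

Definition finsupp I (f : tsum I) : Prop :=
  exists L : seq (I * seq nat), forall x, f x != 0 -> exists2 j, (j < size L)%N & x = nth x L j.

(* action of A \in GL_n(k):  (A.f)(i,t) = \sum_s f(i,s) \prod_j A_{t_j s_j};
   only s with size s = size t and entries < n + max t + 1 contribute. *)
Definition tsum_act I n (A : 'M[k]_n) (f : tsum I) : tsum I :=
  fun x => let: (i, t) := x in
    \sum_(s : (size t).-tuple 'I_(n + foldr maxn 0%N t + 1))
      f (i, [seq val j | j <- s]) *
      \prod_(j < size t) extmx A (nth 0%N t j) (val (tnth s j)).

(* M (a k-vector space with scalar multiplication sc, and GL-action act) is a
   polynomial representation: it is a subquotient of a direct sum of tensor
   powers of V, i.e. there is a GL-stable subspace W of such a direct sum and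
   a surjective GL-equivariant k-linear map W -> M. *)
Definition polynomial_rep (M : zmodType) (sc : k -> M -> M)
    (act : forall n, 'M[k]_n -> M -> M) : Prop :=
  exists (I : Type) (W : tsum I -> Prop) (phi : tsum I -> M),
    [/\ (forall f, W f -> finsupp f),
        W (fun _ => 0),
        (forall c f g, W f -> W g -> W (fun x => c * f x + g x)),
        (forall n (A : 'M[k]_n) f, A \in unitmx -> W f -> W (tsum_act A f)) &
     [/\ (forall c f g, W f -> W g ->
            phi (fun x => c * f x + g x) = sc c (phi f) + phi g),
         (forall n (A : 'M[k]_n) f, A \in unitmx -> W f ->
            phi (tsum_act A f) = act n A (phi f)) &
         (forall m, exists2 f, W f & phi f = m)]].

Record GLalg := {
  ga_car :> comAlgType k;
  ga_act : forall n, 'M[k]_n -> ga_car -> ga_car;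
  ga_action : GLaction ga_act;
  ga_morph : forall n (A : 'M[k]_n), A \in unitmx ->
    [/\ ga_act A 1 = 1,
        forall x y, ga_act A (x + y) = ga_act A x + ga_act A y,
        forall x y, ga_act A (x * y) = ga_act A x * ga_act A y &
        forall (c : k) x, ga_act A (c *: x) = c *: ga_act A x];
  ga_poly : polynomial_rep (fun c x => c *: x) ga_act
}.
Arguments ga_act g {n} A x.
Arguments ga_morph g {n A} uA.

Record GLmod (B : GLalg) := {
  gm_car :> lmodType (ga_car B);
  gm_act : forall n, 'M[k]_n -> gm_car -> gm_car;
  gm_action : GLaction gm_act;
  gm_compat : forall n (A : 'M[k]_n), A \in unitmx ->
    (forall x y, gm_act A (x + y) = gm_act A x + gm_act A y) /\
    (forall (b : ga_car B) x, gm_act A (b *: x) = ga_act B A b *: gm_act A x);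
  gm_poly : polynomial_rep (fun c x => (c%:A : ga_car B) *: x) gm_act
}.
Arguments gm_act {B} g {n} A x.
Arguments gm_compat {B} g {n A} uA.

Lemma additive_opp (U V : zmodType) (f : U -> V) :
  (forall x y, f (x + y) = f x + f y) -> forall y, f (- y) = - f y.
Proof.
move=> h y.
have f0 : f 0 = 0.
  by have := h 0 0; rewrite addr0 => /(congr1 (fun z => z - f 0));
     rewrite addrK subrr => ->.
by apply/eqP; rewrite -subr_eq0 opprK -h addNr f0.
Qed.

Lemma additive_0 (U V : zmodType) (f : U -> V) :
  (forall x y, f (x + y) = f x + f y) -> f 0 = 0.
Proof.
by move=> h; have := h 0 0; rewrite addr0 => /(congr1 (fun z => z - f 0));
   rewrite addrK subrr => ->.
Qed.

Section Invariants.
Variable B : GLalg.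

Definition inv_pred : pred (ga_car B) :=
  fun b => `[< forall n (A : 'M[k]_n), A \in unitmx -> ga_act B A b = b >].

Lemma inv_subring_closed : subring_closed inv_pred.
Proof.
split.
- by apply/asboolP=> n A uA; case: (ga_morph B uA).
- move=> x y /asboolP Hx /asboolP Hy; apply/asboolP=> n A uA.
  have [_ hadd _ _] := ga_morph B uA.
  have hopp := additive_opp hadd y.
  by rewrite hadd hopp Hx // Hy.
- move=> x y /asboolP Hx /asboolP Hy; apply/asboolP=> n A uA.
  by have [_ _ hmul _] := ga_morph B uA; rewrite hmul Hx // Hy.
Qed.

HB.instance Definition _ := GRing.isSubringClosed.Build (ga_car B) inv_pred
  inv_subring_closed.

Record invB := InvB { invB_val :> ga_car B; invB_valP : invB_val \in inv_pred }.

HB.instance Definition _ := [isSub for invB_val].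
HB.instance Definition _ := [Choice of invB by <:].
HB.instance Definition _ := [SubChoice_isSubComNzRing of invB by <:].

Variable N : GLmod B.

Definition invN_pred : pred (gm_car N) :=
  fun x => `[< forall n (A : 'M[k]_n), A \in unitmx -> gm_act N A x = x >].

Lemma invN_zmod_closed : zmod_closed invN_pred.
Proof.
split.
- by apply/asboolP=> n A uA; have [hadd _] := gm_compat N uA; rewrite (additive_0 hadd).
- move=> x y /asboolP Hx /asboolP Hy; apply/asboolP=> n A uA.
  have [hadd hsc] := gm_compat N uA.
  have hopp := additive_opp hadd y.
  by rewrite hadd hopp Hx // Hy.
Qed.

HB.instance Definition _ := GRing.isZmodClosed.Build (gm_car N) invN_pred
  invN_zmod_closed.

Record invN := InvN { invN_val :> gm_car N; invN_valP : invN_val \in invN_pred }.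

HB.instance Definition _ := [isSub for invN_val].
HB.instance Definition _ := [Choice of invN by <:].
HB.instance Definition _ := [SubChoice_isSubZmodule of invN by <:].

Lemma invN_scale_subproof (r : invB) (x : invN) :
  ((r : ga_car B) *: (x : gm_car N)) \in invN_pred.
Proof.
apply/asboolP=> n A uA; have [_ hsc] := gm_compat N uA.
rewrite hsc; have /asboolP Hr := invB_valP r; have /asboolP Hx := invN_valP x.
by rewrite Hr // Hx.
Qed.

Definition invN_scale (r : invB) (x : invN) : invN :=
  InvN (invN_scale_subproof r x).

Lemma invN_scalerA a b v :
  invN_scale a (invN_scale b v) = invN_scale (a * b) v.
Proof. by apply: val_inj; rewrite /= scalerA. Qed.

Lemma invN_scale1r : left_id 1 invN_scale.
Proof. by move=> v; apply: val_inj; rewrite /= scale1r. Qed.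

Lemma invN_scalerDr : right_distributive invN_scale +%R.
Proof. by move=> a u v; apply: val_inj; rewrite /= scalerDr. Qed.

Lemma invN_scalerDl v : {morph invN_scale^~ v : a b / a + b}.
Proof. by move=> a b; apply: val_inj; rewrite /= scalerDl. Qed.

HB.instance Definition _ := GRing.Zmodule_isLmodule.Build invB invN
  invN_scalerA invN_scale1r invN_scalerDr invN_scalerDl.

End Invariants.

End GL.

From HB Require Import structures.
From mathcomp Require Import all_boot all_order all_algebra.
From mathcomp Require Import boolp.

Set Implicit Arguments.
Unset Strict Implicit.
Unset Printing Implicit Defensive.

Import GRing.Theory.
Local Open Scope ring_scope.

(* In characteristic 0 a polynomial representation is graded by degree, and
   the scalar matrix t * 1_n (n large) acts on the degree-d part by t^d.
   Interpolating at t = 1, ..., D+1 (a Vandermonde system, invertible in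
   characteristic 0) extracts the degree-0 part, which is GL-invariant; this
   gives a ring retraction pi : B -> B^GL and a pi-semilinear retraction
   N -> N^GL, since degrees add under multiplication.  Viewing a
   B^GL-module M as a B-module through pi, N^GL (x)_{B^GL} M is then a retract
   of N (x)_B M, naturally in M, and flatness passes to such retracts. *)

Definition restrict_scalars (R S : pzRingType) (f : {rmorphism R -> S})
  (M : lmodType S) : Type := M.

Section RestrictScalars.
Variables (R S : pzRingType) (f : {rmorphism R -> S}) (M : lmodType S).

HB.instance Definition _ := GRing.Zmodule.on (restrict_scalars f M).

Definition restrict_scale (r : R) (m : restrict_scalars f M) :
    restrict_scalars f M :=
  f r *: (m : M).

Lemma restrict_scaleA a b (m : restrict_scalars f M) :
  restrict_scale a (restrict_scale b m) = restrict_scale (a * b) m.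
Proof. by rewrite /restrict_scale rmorphM scalerA. Qed.

Lemma restrict_scale1 : left_id 1 restrict_scale.
Proof. by move=> m; rewrite /restrict_scale rmorph1 scale1r. Qed.

Lemma restrict_scalerDr : right_distributive restrict_scale +%R.
Proof. by move=> a m m'; rewrite /restrict_scale scalerDr. Qed.

Lemma restrict_scalerDl m : {morph restrict_scale^~ m : a b / a + b}.
Proof. by move=> a b; rewrite /restrict_scale rmorphD scalerDl. Qed.

HB.instance Definition _ := GRing.Zmodule_isLmodule.Build R (restrict_scalars f M)
  restrict_scaleA restrict_scale1 restrict_scalerDr restrict_scalerDl.

End RestrictScalars.

Section FlatRetract.
Variables (R S : comNzRingType) (iota : R -> S) (pi : {rmorphism S -> R}).
Hypothesis pi_iota : cancel iota pi.
Variables (P : lmodType S) (Q : lmodType R) (j : Q -> P) (p : P -> Q).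
Hypotheses (j_add : {morph j : x y / x + y})
  (j_scale : forall r q, j (r *: q) = iota r *: j q)
  (p_add : {morph p : x y / x + y})
  (p_scale : forall s x, p (s *: x) = pi s *: p x)
  (p_j : cancel j p).

Lemma tensor_zero_retract (M : lmodType R) (s : seq (Q * M)) :
  tensor_zero (s : seq (Q * restrict_scalars pi M)) <->
  tensor_zero [seq (j x.1, x.2 : restrict_scalars pi M) | x <- s].
Proof.
split=> s0 G beta betaDl betaDr betaZ.
- rewrite big_map.
  apply: (s0 G (fun q m => beta (j q) m)) => [q q' m|q m m'|r q m].
  + by rewrite j_add betaDl.
  + exact: betaDr.
  + by rewrite j_scale betaZ /GRing.scale /= /restrict_scale pi_iota.
- have := s0 G (fun x m => beta (p x) m); rewrite big_map.
  under eq_bigr do rewrite p_j.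
  apply=> [x x' m|x m m'|a x m].
  + by rewrite p_add betaDl.
  + exact: betaDr.
  + by rewrite p_scale betaZ.
Qed.

Lemma flat_retract : flat P -> flat Q.
Proof.
move=> flatP M1 M2 g g_lin g_inj s /tensor_zero_retract gs0.
apply/tensor_zero_retract.
pose g' : restrict_scalars pi M1 -> restrict_scalars pi M2 := g.
have g'_lin a x y : g' (a *: x + y) = a *: g' x + g' y by exact: g_lin.
have := flatP _ _ _ g'_lin g_inj
  [seq (j x.1, x.2 : restrict_scalars pi M1) | x <- s].
by rewrite -!map_comp; apply; move: gs0; rewrite -map_comp.
Qed.

End FlatRetract.

Lemma vandermonde_weights (k : fieldType) D (a : 'I_D.+1 -> k) j :
  injective a -> (j <= D)%N ->
  exists c : 'I_D.+1 -> k,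
    forall d, (d <= D)%N -> \sum_i c i * a i ^+ d = (d == j)%:R.
Proof.
move=> a_inj jD; pose V := Vandermonde D.+1 (\row_i a i).
have uV : V \in unitmx.
  rewrite unitmxE det_Vandermonde unitfE; apply/prodf_neq0 => i _.
  apply/prodf_neq0 => l il; rewrite !mxE subr_eq0; apply: contraTneq il.
  by move/a_inj->; rewrite ltnn.
exists (fun i => invmx V i (inord j)) => d dD.
have := congr1 (fun M : 'M_D.+1 => M (inord d) (inord j)) (mulmxV uV).
rewrite /= !mxE -val_eqE /= !inordK ?ltnS // => <-; apply: eq_bigr => i _.
by rewrite /V /Vandermonde !mxE inordK // mulrC.
Qed.

Lemma scalar_unitmx (k : fieldType) n (t : k) :
  t != 0 -> (t%:M : 'M_n) \in unitmx.
Proof. by move=> t0; rewrite unitmxE det_scalar unitfE expf_neq0. Qed.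

Lemma extmx_scalar (k : fieldType) n (t : k) a b :
  extmx (t%:M : 'M_n) a b = (a == b)%:R * (if (a < n)%N then t else 1).
Proof.
rewrite /extmx; case: (ltnP a n) => an; last first.
  by rewrite insubF ?ltnNge ?an // mulr1.
rewrite (insubT (fun i => i < n)%N an); case: (ltnP b n) => bn.
  by rewrite (insubT (fun i => i < n)%N bn) !mxE mulr_natl.
rewrite insubF ?ltnNge ?bn //; case: eqP => [ab|_]; last by rewrite mul0r.
by move: bn; rewrite -ab leqNgt an.
Qed.

Lemma nth_leq_foldr_max (u : seq nat) j : (nth 0 u j <= foldr maxn 0 u)%N.
Proof.
elim: u j => [|x u IH] [|j] //=; first by rewrite leq_maxl.
by rewrite (leq_trans (IH j)) // leq_maxr.
Qed.

Lemma leq_bigmax_nth (X : Type) (F : X -> nat) (L : seq X) x0 j :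
  (j < size L)%N -> (F (nth x0 L j) <= \max_(y <- L) F y)%N.
Proof.
elim: L j => [|y L IH] [|j] //= jL; rewrite big_cons ?leq_maxl //.
by rewrite (leq_trans (IH j jL)) // leq_maxr.
Qed.

Section TensorSums.
Variables (k : fieldType) (I : Type).
Implicit Types (f : tsum k I) (x : I * seq nat).

Lemma tsum_act_scalar n (t : k) f x :
  tsum_act (t%:M : 'M_n) f x =
  f x * \prod_(j < size x.2) (if (nth 0 x.2 j < n)%N then t else 1).
Proof.
case: x => i u /=; set m := (n + foldr maxn 0 u + 1)%N.
have um j : (nth 0 u j < m)%N.
  by rewrite /m addn1 ltnS (leq_trans (nth_leq_foldr_max u j)) // leq_addl.
pose s0 : (size u).-tuple 'I_m := [tuple Ordinal (um j) | j < size u].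
have s0E : [seq val j | j <- s0] = u.
  apply: (@eq_from_nth _ 0); first by rewrite size_map size_tuple.
  move=> j; rewrite size_map size_tuple => ju.
  have x0 : 'I_m by exists 0%N; rewrite /m addn1.
  rewrite (nth_map x0) ?size_tuple // -[nth x0 s0 j]/(nth x0 s0 (Ordinal ju)).
  by rewrite -tnth_nth tnth_mktuple.
rewrite (bigD1 s0) //= s0E [X in _ + X]big1 ?addr0.
  congr (_ * _); apply: eq_bigr => j _.
  by rewrite extmx_scalar tnth_mktuple eqxx mul1r.
move=> s ss0; have [j sj] : exists j, tnth s j != tnth s0 j.
  apply/existsP; apply: contraNT ss0; rewrite negb_exists => /forallP s_s0.
  by apply/eqP/eq_from_tnth => j; apply/eqP; have := s_s0 j; rewrite negbK.
rewrite (bigD1 j) //= extmx_scalar.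
have -> : (nth 0 u j == tnth s j) = false.
  apply/negbTE; apply: contra sj => /eqP uj.
  by rewrite tnth_mktuple; apply/eqP/val_inj; rewrite /= uj.
by rewrite !mul0r mulr0.
Qed.

Definition tsum_bounded f (n0 D : nat) : Prop :=
  forall x, f x != 0 -> (size x.2 <= D)%N /\ forall j, (nth 0 x.2 j < n0)%N.

Lemma finsupp_bounded f : finsupp f -> exists n0 D, tsum_bounded f n0 D.
Proof.
move=> [L fL].
exists (\max_(y <- L) foldr maxn 0 y.2).+1, (\max_(y <- L) size y.2).
move=> x /fL [j jL ->]; split.
  exact: (leq_bigmax_nth (fun y : I * seq nat => size y.2)).
move=> j'; rewrite ltnS (leq_trans (nth_leq_foldr_max _ j')) //.
exact: (leq_bigmax_nth (fun y : I * seq nat => foldr maxn 0 y.2)).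
Qed.

Lemma tsum_act_scalar_bounded f n0 D n (t : k) :
  tsum_bounded f n0 D -> (n0 <= n)%N ->
  tsum_act (t%:M : 'M_n) f = fun x => t ^+ size x.2 * f x.
Proof.
move=> fb n0n; apply: funext => x; rewrite tsum_act_scalar.
have [->|/fb [_ xn0]] := eqVneq (f x) 0; first by rewrite mul0r mulr0.
rewrite mulrC (eq_bigr (fun=> t)) ?prodr_const ?card_ord // => j _.
by rewrite (leq_trans (xn0 j) n0n).
Qed.

Definition tsum_hcomp f d : tsum k I := fun x => (size x.2 == d)%:R * f x.

Lemma tsum_act_hcomp0 f n (A : 'M_n) :
  tsum_act A (tsum_hcomp f 0) = tsum_hcomp f 0.
Proof.
apply: funext => -[i [|a u]]; rewrite /tsum_act /tsum_hcomp /=.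
  rewrite (big_pred1 [tuple]) => [|s]; last by apply/esym/eqP/tuple0.
  by rewrite big_ord0 mulr1.
by rewrite big1 ?mul0r // => s _; rewrite size_map size_tuple /= !mul0r.
Qed.

End TensorSums.

Section Char0.
Variable k : fieldType.
Hypothesis hk : [pchar k] =i pred0.

Lemma natr_inj_char0 : injective (fun n : nat => n%:R : k).
Proof.
have /pcharf0P natr_eq0 := hk.
suff le_inj m n : (m <= n)%N -> (m%:R : k) = n%:R -> m = n.
  move=> m n mn; case/orP: (leq_total m n) => [/le_inj|/le_inj nm]; first exact.
  exact/esym/nm.
move=> mn /eqP; rewrite eq_sym -subr_eq0 -natrB // natr_eq0 subn_eq0 => nm.
by apply/eqP; rewrite eqn_leq mn.
Qed.

Lemma char0_weights D j : (j <= D)%N ->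
  exists c : 'I_D.+1 -> k,
    forall d, (d <= D)%N -> \sum_i c i * (i.+1)%:R ^+ d = (d == j)%:R.
Proof.
by apply: vandermonde_weights => i l /natr_inj_char0 [] /val_inj.
Qed.

Lemma natrS_neq0_char0 n : (n.+1%:R : k) != 0.
Proof. by have /pcharf0P -> := hk. Qed.

Section Expansion.
Variables (V : lmodType k) (act : forall n, 'M[k]_n -> V -> V).

Definition invariant (x : V) : Prop :=
  forall n (A : 'M[k]_n), A \in unitmx -> act A x = x.

(* A pair (d, x_d) of s is the degree-d component of x; scalar matrices t 1_n
   act on it by t^d as soon as n exceeds every basis index e_j occurring in x. *)
Definition scalar_expansion (x : V) (n0 : nat) (s : seq (nat * V)) : Prop :=
  forall n, (n0 <= n)%N -> forall t : k, t != 0 ->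
    act (t%:M : 'M_n) x = \sum_(p <- s) t ^+ p.1 *: p.2.

Definition degree0 (s : seq (nat * V)) : V := \sum_(p <- s | p.1 == 0%N) p.2.

Lemma degree0_interpolate (s : seq (nat * V)) D (a c : 'I_D.+1 -> k) :
  (forall p, p \in s -> (p.1 <= D)%N) ->
  (forall d, (d <= D)%N -> \sum_i c i * a i ^+ d = (d == 0%N)%:R) ->
  \sum_i c i *: \sum_(p <- s) a i ^+ p.1 *: p.2 = degree0 s.
Proof.
move=> sD ca; rewrite /degree0 [RHS]big_mkcond.
under [LHS]eq_bigr do rewrite scaler_sumr.
rewrite exchange_big /= [RHS]big_seq [LHS]big_seq; apply: eq_bigr => p ps.
under eq_bigr do rewrite scalerA.
by rewrite -scaler_suml ca ?sD //; case: eqP; rewrite ?scale1r ?scale0r.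
Qed.

Lemma degree0_uniq x n0 n1 s s' :
  scalar_expansion x n0 s -> scalar_expansion x n1 s' -> degree0 s = degree0 s'.
Proof.
move=> xs xs'; set D := \max_(p <- s ++ s') p.1.
have [c cE] := char0_weights (leq0n D).
have sD p : p \in s ++ s' -> (p.1 <= D)%N.
  by move=> ps; apply: (leq_bigmax_seq (F := fun p : nat * V => p.1)) ps isT.
rewrite -(@degree0_interpolate s D (fun i => (i.+1)%:R) c) => [|p ps|//].
  rewrite -(@degree0_interpolate s' D (fun i => (i.+1)%:R) c) => [|p ps|//].
    apply: eq_bigr => i _; congr (_ *: _).
    rewrite -(xs (maxn n0 n1)) ?leq_maxl ?natrS_neq0_char0 //.
    by rewrite xs' ?leq_maxr ?natrS_neq0_char0.
  by apply: sD; rewrite mem_cat ps orbT.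
by apply: sD; rewrite mem_cat ps.
Qed.

Section Subquotient.
Variables (I : Type) (W : tsum k I -> Prop) (phi : tsum k I -> V).
Hypotheses (W_finsupp : forall f, W f -> finsupp f) (W0 : W (fun _ => 0))
  (W_lin : forall c f g, W f -> W g -> W (fun x => c * f x + g x))
  (W_act : forall n (A : 'M[k]_n) f, A \in unitmx -> W f -> W (tsum_act A f))
  (phi_lin : forall c f g, W f -> W g ->
     phi (fun x => c * f x + g x) = c *: phi f + phi g)
  (phi_act : forall n (A : 'M[k]_n) f, A \in unitmx -> W f ->
     phi (tsum_act A f) = act A (phi f)).

Lemma phi0 : phi (fun _ => 0) = 0.
Proof.
have := phi_lin 1 W0 W0; rewrite scale1r.
have -> : (fun x : I * seq nat => 1 * 0 + 0) = (fun _ => 0 : k).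
  by apply: funext => x; rewrite mul1r addr0.
by move/(congr1 (fun y => y - phi (fun _ => 0))); rewrite addrK subrr => <-.
Qed.

Lemma W_lincomb (X : Type) (r : seq X) (c : X -> k) (g : X -> tsum k I) :
  (forall a, W (g a)) ->
  W (fun x => \sum_(a <- r) c a * g a x) /\
  phi (fun x => \sum_(a <- r) c a * g a x) = \sum_(a <- r) c a *: phi (g a).
Proof.
move=> Wg; elim: r => [|a r [Wr phir]].
  under eq_fun do rewrite big_nil.
  by rewrite phi0 big_nil.
under eq_fun do rewrite big_cons.
by rewrite phi_lin // phir big_cons; split; first exact: W_lin.
Qed.

Lemma W_hcomp f d : W f -> W (tsum_hcomp f d).
Proof.
move=> Wf; have [n0 [D fb]] := finsupp_bounded (W_finsupp Wf).
case: (leqP d D) => dD; last first.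
  suff -> : tsum_hcomp f d = (fun _ => 0) by [].
  apply: funext => x; rewrite /tsum_hcomp.
  have [->|/fb [xD _]] := eqVneq (f x) 0; first by rewrite mulr0.
  by case: eqP xD => [->|_]; rewrite ?mul0r // leqNgt dD.
have [c cE] := char0_weights dD.
have -> : tsum_hcomp f d = (fun x => \sum_(i <- enum 'I_D.+1)
     c i * tsum_act (((i.+1)%:R : k)%:M : 'M_n0) f x).
  apply: funext => x; rewrite /tsum_hcomp.
  under eq_bigr do rewrite (tsum_act_scalar_bounded _ fb (leqnn n0)) mulrA.
  rewrite -mulr_suml.
  have [->|/fb [xD _]] := eqVneq (f x) 0; first by rewrite !mulr0.
  by rewrite big_enum /= cE.
apply: (W_lincomb _ _ _).1 => i.
by apply: W_act => //; rewrite scalar_unitmx ?natrS_neq0_char0.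
Qed.

Lemma subquotient_expansion f : W f ->
  exists n0 s, scalar_expansion (phi f) n0 s /\ invariant (degree0 s).
Proof.
move=> Wf; have [n0 [D fb]] := finsupp_bounded (W_finsupp Wf).
exists n0, [seq (d, phi (tsum_hcomp f d)) | d <- iota 0 D.+1]; split.
  move=> n n0n t t0; rewrite -phi_act ?scalar_unitmx //.
  rewrite (tsum_act_scalar_bounded _ fb n0n) big_map.
  rewrite -(W_lincomb _ _ (fun d => W_hcomp d Wf)).2; congr phi.
  apply: funext => x; rewrite /tsum_hcomp.
  have [->|/fb [xD _]] := eqVneq (f x) 0.
    by rewrite mulr0 big1 // => d _; rewrite !mulr0.
  rewrite (bigD1_seq (size x.2)) ?mem_iota ?iota_uniq ?add0n ?ltnS //=.
  rewrite eqxx mul1r big1 ?addr0 // => d /negbTE.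
  by rewrite eq_sym => ->; rewrite mul0r mulr0.
have -> : degree0 [seq (d, phi (tsum_hcomp f d)) | d <- iota 0 D.+1] =
          phi (tsum_hcomp f 0).
  rewrite /degree0 big_map /= big_cons /= big_seq_cond big1 ?addr0 // => d.
  by rewrite mem_iota => /andP [/andP [d1 _] /eqP d0]; rewrite d0 in d1.
move=> n A uA; rewrite -phi_act ?tsum_act_hcomp0 //; exact: W_hcomp.
Qed.

End Subquotient.

Hypothesis act_poly : polynomial_rep (fun c (x : V) => c *: x) act.

Lemma polynomial_rep_expansion x :
  exists n0 s, scalar_expansion x n0 s /\ invariant (degree0 s).
Proof.
have [I [W [phi [W_fs W0 W_lin W_act [phi_lin phi_act phi_onto]]]]] := act_poly.
have [f Wf <-] := phi_onto x.
exact: subquotient_expansion W_fs W0 W_lin W_act phi_lin phi_act f Wf.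
Qed.

Lemma scalar_expansion_exists x : exists s, exists n0, scalar_expansion x n0 s.
Proof. by have [n0 [s [xs _]]] := polynomial_rep_expansion x; exists s, n0. Qed.

Definition inv_proj (x : V) : V :=
  degree0 (sval (cid (scalar_expansion_exists x))).

Lemma inv_projE x n0 s : scalar_expansion x n0 s -> inv_proj x = degree0 s.
Proof.
have [n1 xs1] := svalP (cid (scalar_expansion_exists x)).
by move/(degree0_uniq xs1).
Qed.

Lemma inv_proj_invariant x : invariant (inv_proj x).
Proof.
by have [n0 [s [xs s0]]] := polynomial_rep_expansion x; rewrite (inv_projE xs).
Qed.

Lemma inv_proj_id x : invariant x -> inv_proj x = x.
Proof.
move=> xinv; suff /inv_projE -> : scalar_expansion x 0 [:: (0%N, x)].
  by rewrite /degree0 big_cons /= big_nil addr0.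
move=> n _ t t0; rewrite xinv ?scalar_unitmx //.
by rewrite big_cons big_nil expr0 scale1r addr0.
Qed.

Hypothesis act_add : forall n (A : 'M_n), A \in unitmx ->
  {morph act A : x y / x + y}.

Lemma inv_projD x y : inv_proj (x + y) = inv_proj x + inv_proj y.
Proof.
have [n0 [s [xs _]]] := polynomial_rep_expansion x.
have [n1 [s' [ys _]]] := polynomial_rep_expansion y.
suff /inv_projE -> : scalar_expansion (x + y) (maxn n0 n1) (s ++ s').
  by rewrite (inv_projE xs) (inv_projE ys) /degree0 big_cat.
move=> n n01 t t0; rewrite act_add ?scalar_unitmx // big_cat /=.
by rewrite xs ?ys // (leq_trans _ n01) // ?leq_maxl ?leq_maxr.
Qed.

End Expansion.

Section Bilinear.
Variables (U V W : lmodType k) (actU : forall n, 'M[k]_n -> U -> U)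
  (actV : forall n, 'M[k]_n -> V -> V) (actW : forall n, 'M[k]_n -> W -> W)
  (mu : U -> V -> W).
Hypotheses (muDl : forall v, {morph mu^~ v : u u' / u + u'})
  (muDr : forall u, {morph mu u : v v' / v + v'})
  (muZZ : forall (a b : k) u v, mu (a *: u) (b *: v) = (a * b) *: mu u v)
  (act_mu : forall n (A : 'M[k]_n), A \in unitmx -> forall u v,
     actW A (mu u v) = mu (actU A u) (actV A v)).

Lemma mu_suml (X : Type) (r : seq X) (F : X -> U) v :
  mu (\sum_(a <- r) F a) v = \sum_(a <- r) mu (F a) v.
Proof. exact: (big_morph (mu^~ v) (muDl v) (additive_0 (muDl v))). Qed.

Lemma mu_sumr (X : Type) (r : seq X) u (F : X -> V) :
  mu u (\sum_(a <- r) F a) = \sum_(a <- r) mu u (F a).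
Proof. exact: (big_morph (mu u) (muDr u) (additive_0 (muDr u))). Qed.

Lemma scalar_expansion_bilinear u v n0 n1 s s' :
  scalar_expansion actU u n0 s -> scalar_expansion actV v n1 s' ->
  scalar_expansion actW (mu u v) (maxn n0 n1)
    [seq ((p.1 + q.1)%N, mu p.2 q.2) | p <- s, q <- s'].
Proof.
move=> us vs n n01 t t0; rewrite act_mu ?scalar_unitmx //.
rewrite us ?vs ?(leq_trans _ n01) ?leq_maxl ?leq_maxr // big_allpairs_dep mu_suml.
apply: eq_bigr => p _; rewrite mu_sumr; apply: eq_bigr => q _.
by rewrite muZZ exprD.
Qed.

Lemma degree0_bilinear s s' :
  degree0 [seq ((p.1 + q.1)%N, mu p.2 q.2) | p <- s, q <- s'] =
  mu (degree0 s) (degree0 s').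
Proof.
rewrite /degree0 [LHS]big_mkcond big_allpairs_dep /= [X in mu X _]big_mkcond.
rewrite mu_suml.
apply: eq_bigr => p _; case: (p.1 =P 0%N) => [p0|pn0].
  rewrite [X in mu _ X]big_mkcond mu_sumr; apply: eq_bigr => q _.
  by rewrite p0 add0n; case: ifP; rewrite ?(additive_0 (muDr _)).
rewrite (additive_0 (muDl _)) big1 // => q _.
by rewrite addn_eq0; case: eqP pn0.
Qed.

Hypotheses (polyU : polynomial_rep (fun c (u : U) => c *: u) actU)
  (polyV : polynomial_rep (fun c (v : V) => c *: v) actV)
  (polyW : polynomial_rep (fun c (w : W) => c *: w) actW).

Lemma inv_proj_bilinear u v :
  inv_proj polyW (mu u v) = mu (inv_proj polyU u) (inv_proj polyV v).
Proof.
have [n0 [s [us _]]] := polynomial_rep_expansion polyU u.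
have [n1 [s' [vs _]]] := polynomial_rep_expansion polyV v.
rewrite (inv_projE polyW (scalar_expansion_bilinear us vs)) degree0_bilinear.
by rewrite (inv_projE polyU us) (inv_projE polyV vs).
Qed.

End Bilinear.

End Char0.

Section InvariantProjections.
Variables (k : fieldType) (hk : [pchar k] =i pred0) (B : GLalg k) (N : GLmod B).

Local Notation Nk := (restrict_scalars (in_alg (ga_car B)) (gm_car N)).

Let polyB : polynomial_rep (fun c (b : ga_car B) => c *: b) (@ga_act k B) :=
  ga_poly B.
Let polyN : polynomial_rep (fun c (x : Nk) => c *: x) (@gm_act k B N) :=
  gm_poly N.

Lemma invB_proj_subproof b : inv_proj hk polyB b \in @inv_pred k B.
Proof. exact/asboolP/(inv_proj_invariant hk polyB). Qed.

Definition invB_proj (b : ga_car B) : invB B := InvB (invB_proj_subproof b).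

Lemma invB_projK : cancel val invB_proj.
Proof.
move=> r; apply: val_inj; apply: inv_proj_id.
by have /asboolP := invB_valP r.
Qed.

Lemma invB_projD : {morph invB_proj : x y / x + y}.
Proof.
move=> x y; apply: val_inj; apply: inv_projD => n A uA.
by have [_ actD _ _] := ga_morph B uA.
Qed.

Lemma invB_projM : {morph invB_proj : x y / x * y}.
Proof.
move=> x y; apply: val_inj; apply: (@inv_proj_bilinear _ hk _ _ _ _ _ _ *%R).
- by move=> v u u'; rewrite mulrDl.
- by move=> u v v'; rewrite mulrDr.
- by move=> a b u v; rewrite -scalerAl -scalerAr scalerA.
- by move=> n A uA; have [_ _ actM _] := ga_morph B uA.
Qed.

Lemma invB_proj1 : invB_proj 1 = 1.
Proof. by rewrite -(invB_projK 1). Qed.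

HB.instance Definition _ := GRing.isNmodMorphism.Build _ _ invB_proj
  (additive_0 invB_projD, invB_projD).
HB.instance Definition _ := GRing.isMonoidMorphism.Build _ _ invB_proj
  (invB_proj1, invB_projM).

Lemma invN_proj_subproof (x : gm_car N) :
  inv_proj hk polyN x \in @invN_pred k B N.
Proof. exact/asboolP/(inv_proj_invariant hk polyN). Qed.

Definition invN_proj (x : gm_car N) : invN N := InvN (invN_proj_subproof x).

Lemma invN_projK : cancel val invN_proj.
Proof.
move=> x; apply: val_inj; apply: (inv_proj_id hk polyN).
by have /asboolP := invN_valP x.
Qed.

Lemma invN_projD : {morph invN_proj : x y / x + y}.
Proof.
move=> x y; apply: val_inj; apply: (inv_projD hk polyN) => n A uA.
by have [actD _] := gm_compat N uA.
Qed.

Lemma invN_projZ b x : invN_proj (b *: x) = invB_proj b *: invN_proj x.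
Proof.
apply: val_inj; apply: (@inv_proj_bilinear _ hk _ _ _ _ _ _
  (fun b (x : Nk) => (b *: (x : gm_car N) : Nk)) _ _ _ _ polyB polyN polyN).
- by move=> v u u'; rewrite scalerDl.
- by move=> u v v'; rewrite scalerDr.
- move=> a c u v.
  change ((a *: u) *: (c%:A *: (v : gm_car N)) =
          (a * c)%:A *: (u *: (v : gm_car N)) :> gm_car N).
  by rewrite !scalerA mulr_algr mulr_algl scalerA mulrC.
- by move=> n A uA; have [_ actZ] := gm_compat N uA.
Qed.

End InvariantProjections.

Theorem lemma6p11 (k : fieldType) (hk : [pchar k] =i pred0)
    (B : GLalg k) (N : GLmod B) :
  flat (gm_car N) -> flat (invN N).
Proof.
apply: (flat_retract (invB_projK hk (B := B)) _ _ (invN_projD hk (N := N))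
  (invN_projZ hk (N := N)) (invN_projK hk (N := N))) => //.
Qed.
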